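(* The sequence of expected probabilities $\mathrm{Prob}(\mathcal{V}\mid\mathcal{E})$ that Peggy deceives Victor by guessing and sending her response before receiving the challenge is indistinguishable from the sequence $$q_\ell=\sum_{h\in\mathbb{Z}_2^{\ell}}\sum_{x\in\mathbb{Z}_2^\ell}2^{-\ell}\,G(h\vdash x\boxplus h)_\ell=\left(\tfrac34\right)^\ell.$$ In particular $\mathrm{Prob}(\mathcal{V}\mid\mathcal{E})$ is negligible.
   Context: Hancke–Kuhn protocol with security parameter $\ell$: shared secret $s$, hash $H$ modeled as a random oracle, counters $a,b$ never reused, token $h=H(s::a::b)=h^{(0)}::h^{(1)}$, Victor's uniformly random challenge $x\in\mathbb{Z}_2^\ell$ (independent of $s,a,b$), correct response $x\boxplus h$ with $(x\boxplus h)_i=h^{(x_i)}_i$. $\mathcal{E}$: the event/run in which Peggy (knowing $s$) sends her response before receiving the challenge. $\mathcal{V}$: Victor observes a satisfactory run (sends $x$ and receives the correct response in time). $G(\Xi\vdash\Theta)$ is the guessing chance (maximal probability over randomized guessing procedures of producing $\Theta$ from $\Xi$). Sequences are indistinguishable if they differ by a negligible function $\nu$ (for every polynomial $q$ with non-negative integer coefficients, $\nu(\ell)<1/q(\ell)$ for large $\ell$). *)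

From HB Require Import structures.
From mathcomp Require Import all_boot all_order all_algebra.
From mathcomp Require Import boolp classical_sets reals.
Set Implicit Arguments. Unset Strict Implicit. Unset Printing Implicit Defensive.
Import Order.TTheory GRing.Theory Num.Theory.
Local Open Scope ring_scope.

Definition bits (l : nat) := {ffun 'I_l -> bool}.

(* the token h = h^(0) :: h^(1), an element of Z_2^(2l) *)
Definition token (l : nat) := (bits l * bits l)%type.

Definition boxplus (l : nat) (x : bits l) (h : token l) : bits l :=
  [ffun i => if x i then h.2 i else h.1 i].

Definition is_distr (R : realType) (T : finType) (p : {ffun T -> R}) : Prop :=
  (forall t, 0 <= p t) /\ \sum_(t : T) p t = 1.

(* A randomized guessing procedure (in run E, before seeing x) maps the
   information available to Peggy, namely the token h, to a distribution
   over responses. *)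
Definition guess_proc (R : realType) (l : nat) :=
  token l -> {ffun bits l -> R}.

Definition is_guess_proc (R : realType) (l : nat) (g : guess_proc R l) : Prop :=
  forall h, is_distr (g h).

(* success probability of g: h uniform on Z_2^(2l) (random oracle output on
   fresh counters), x uniform on Z_2^l independent of h *)
Definition success (R : realType) (l : nat) (g : guess_proc R l) : R :=
  \sum_(h : token l) \sum_(x : bits l)
     (2%:R ^- (2 * l)) * (2%:R ^- l) * g h (boxplus x h).

(* Prob(V | E)_l : optimal probability that Peggy, sending her response
   before receiving the challenge, makes Victor observe a satisfactory run *)
Definition ProbVE (R : realType) (l : nat) : R :=
  sup [set success g | g in [set g : guess_proc R l | is_guess_proc g]].

(* guessing chance G(h |- x [+] h) for a fixed token h (x uniform, unknown) *)
Definition Gtok (R : realType) (l : nat) (h : token l) : R :=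
  sup [set \sum_(x : bits l) (2%:R ^- l) * p (boxplus x h)
       | p in [set p : {ffun bits l -> R} | is_distr p]].

Definition q_seq (R : realType) (l : nat) : R :=
  \sum_(h : token l) (2%:R ^- (2 * l)) * Gtok R h.

Definition poly_eval (c : seq nat) (l : nat) : nat :=
  \sum_(i < size c) nth 0%N c i * l ^ i.

Definition negligible (R : realType) (nu : nat -> R) : Prop :=
  forall c : seq nat, has (fun a => a != 0%N) c ->
    exists N : nat, forall l : nat, (N <= l)%N ->
      nu l < 1 / (poly_eval c l)%:R.

Definition indistinguishable (R : realType) (a b : nat -> R) : Prop :=
  negligible (fun l => `|a l - b l|).

From mathcomp Require Import all_boot all_order all_algebra.
From mathcomp Require Import boolp classical_sets reals.
From mathcomp Require Import zify ring.
Import Order.TTheory GRing.Theory Num.Theory.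
Set Implicit Arguments. Unset Strict Implicit. Unset Printing Implicit Defensive.

(* Before seeing the challenge, Peggy's best move for a token h is to answer
   h^(0): a response y is correct for exactly the challenges x with
   x [+] h = y, and their number is at most 2^k, k being the number of
   positions where h^(0) and h^(1) agree, with equality for y = h^(0).  Hence
   both Prob(V | E) and q_l equal the average of 2^(k - l) over uniform
   tokens, i.e. (6/16)^l = (3/4)^l, since every position contributes
   (2 + 1 + 1 + 2)/4 on average.  Finally a^l p(l) < (a + 1)^l for every
   polynomial p and large l, by comparison with a single term of the binomial
   expansion of (a + 1)^l. *)

Lemma ffact_ge_subn_exp m n : ((n - m) ^ m <= n ^_ m)%N.
Proof.
elim: m n => [|m IH] n; first by rewrite ffactn0 expn0.
rewrite ffactnS expnS; apply: leq_mul; first exact: leq_subr.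
by have -> : (n - m.+1 = n.-1 - m)%N by lia.
Qed.

Lemma binomial_term_le a l e :
  (e <= l)%N -> ('C(l, e) * a ^ (l - e) <= a.+1 ^ l)%N.
Proof.
move=> le_el; rewrite -addn1 expnDn (bigD1 (Ordinal (_ : e < l.+1)%N)) //=.
by rewrite exp1n muln1 leq_addr.
Qed.

Lemma subn_exp_mul_exp_le a l e :
  (e <= l)%N -> ((l - e) ^ e * a ^ l <= e`! * a ^ e * a.+1 ^ l)%N.
Proof.
move=> le_el.
have ffact_le : ((l - e) ^ e <= 'C(l, e) * e`!)%N.
  by rewrite bin_ffact ffact_ge_subn_exp.
have -> : (a ^ l = a ^ (l - e) * a ^ e)%N by rewrite -expnD subnK.
rewrite !mulnA.
apply: (@leq_trans ('C(l, e) * e`! * a ^ (l - e) * a ^ e)).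
  by rewrite !leq_mul2r ffact_le !orbT.
rewrite [leqLHS](_ : _ = 'C(l, e) * a ^ (l - e) * (e`! * a ^ e))%N; last by ring.
by rewrite mulnC leq_mul2l binomial_term_le ?orbT.
Qed.

Lemma poly_mul_exp_lt_expS a K d :
  exists N, forall l, (N <= l)%N -> (K * l ^ d * a ^ l < a.+1 ^ l)%N.
Proof.
have [-> | a_gt0] := posnP a.
  by exists 1%N => l l_gt0; rewrite exp0n // muln0 exp1n.
pose e := d.+1; pose C := (e`! * a ^ e * 2 ^ e)%N.
have C_gt0 : (0 < C)%N by rewrite !muln_gt0 fact_gt0 !expn_gt0 a_gt0.
exists (2 * e + K * C + 1)%N => l le_Nl.
have le_el : (e <= l)%N by lia.
(* l <= 2 (l - e) once l >= 2 e *)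
have le_exp : (l ^ e <= 2 ^ e * (l - e) ^ e)%N.
  by rewrite -expnMn leq_exp2r //; lia.
have main : (l * (l ^ d * a ^ l) <= C * a.+1 ^ l)%N.
  rewrite mulnA -expnS; apply: (leq_trans (leq_mul le_exp (leqnn (a ^ l)))).
  rewrite [leqRHS](_ : _ = 2 ^ e * (e`! * a ^ e * a.+1 ^ l))%N; last by rewrite /C; ring.
  by rewrite -mulnA leq_mul2l subn_exp_mul_exp_le ?orbT.
have pos : (0 < l ^ d * a ^ l)%N by rewrite muln_gt0 !expn_gt0 a_gt0 (leq_trans _ le_el).
rewrite -(ltn_pmul2l C_gt0); apply: leq_trans main.
by rewrite -(mulnA K) mulnA ltn_pmul2r //; lia.
Qed.

Lemma poly_eval_gt0 c l :
  has (fun a => a != 0%N) c -> (0 < l)%N -> (0 < poly_eval c l)%N.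
Proof.
move=> /hasP [a a_c a_neq0] l_gt0; rewrite /poly_eval.
have ic : (index a c < size c)%N by rewrite index_mem.
rewrite (bigD1 (Ordinal ic)) //= nth_index //.
by apply: leq_trans (leq_addr _ _); rewrite muln_gt0 expn_gt0 l_gt0 lt0n a_neq0.
Qed.

Lemma poly_eval_le c l : (0 < l)%N -> (poly_eval c l <= sumn c * l ^ size c)%N.
Proof.
move=> l_gt0; rewrite /poly_eval.
apply: (@leq_trans (\sum_(i < size c) nth 0%N c i * l ^ size c)).
  by apply: leq_sum => i _; rewrite leq_mul2l leq_pexp2l ?orbT // ltnW.
rewrite -big_distrl /= leq_mul2r; apply/orP; right; apply: eq_leq.
by elim: c {l_gt0} => [|a c IH]; rewrite ?big_ord0 // big_ord_recl /= IH.
Qed.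

Local Open Scope ring_scope.

Lemma negligible_geometric (R : realType) (a : nat) :
  negligible (fun l => (a%:R / a.+1%:R : R) ^+ l).
Proof.
move=> c c_neq0; have [N dom] := poly_mul_exp_lt_expS a (sumn c) (size c).
exists (maxn N 1) => l; rewrite geq_max => /andP [le_Nl l_gt0].
have P_gt0 := poly_eval_gt0 c_neq0 l_gt0.
have key : (a ^ l * poly_eval c l < a.+1 ^ l)%N.
  apply: leq_ltn_trans (dom l le_Nl).
  by rewrite mulnC leq_mul2r poly_eval_le ?orbT.
rewrite expr_div_n ltr_pdivrMr ?exprn_gt0 ?ltr0n // mulrAC.
by rewrite ltr_pdivlMr ?ltr0n // mul1r -!natrX -natrM ltr_nat.
Qed.

Lemma indistinguishable_refl (R : realType) (u : nat -> R) : indistinguishable u u.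
Proof.
move=> c c_neq0; exists 1%N => l l_gt0.
by rewrite subrr normr0 div1r invr_gt0 ltr0n poly_eval_gt0.
Qed.

Lemma sup_eq_max (R : realType) (E : set R) x : E x -> ubound E x -> sup E = x.
Proof.
move=> Ex ubx; apply/le_anti/andP; split; first by apply: ge_sup => //; exists x.
by apply: ub_le_sup => //; exists x.
Qed.

Section Guessing.

Variables (R : realType) (l : nat).
Implicit Types (h : token l) (p : {ffun bits l -> R}).

Definition max_fiber h : R := \prod_(i < l) (if h.1 i == h.2 i then 2%:R else 1).

Definition fiber h (y : bits l) : R := \sum_(x : bits l) (boxplus x h == y)%:R.

Definition guess_value h p : R := \sum_(x : bits l) 2%:R ^- l * p (boxplus x h).

Definition point_mass (y : bits l) : {ffun bits l -> R} := [ffun z => (z == y)%:R].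

Lemma fiberE h y : fiber h y = \prod_(i < l) ((h.1 i == y i)%:R + (h.2 i == y i)%:R).
Proof.
have boxplusE x : (boxplus x h == y)%:R =
    \prod_(i < l) (((if x i then h.2 i else h.1 i) == y i)%:R : R).
  have [<-|neq] := eqVneq (boxplus x h) y.
    by rewrite big1 // => i _; rewrite ffunE eqxx.
  have [i neq_i] : exists i, (if x i then h.2 i else h.1 i) != y i.
    apply/existsP; apply: contraNT neq; rewrite negb_exists => /forallP eq_xy.
    by apply/eqP/ffunP => i; rewrite ffunE; apply/eqP/negPn/eq_xy.
  by rewrite (bigD1 i) //= (negbTE neq_i) mul0r.
rewrite /fiber (eq_bigr _ (fun x _ => boxplusE x)).
rewrite -(bigA_distr_bigA (fun i b => (((if b then h.2 i else h.1 i) == y i)%:R : R))).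
by apply: eq_bigr => i _; rewrite big_bool addrC.
Qed.

Lemma fiber_le_max h y : fiber h y <= max_fiber h.
Proof.
rewrite fiberE; apply: ler_prod => i _; rewrite addr_ge0 //=.
by case: (h.1 i) (h.2 i) (y i) => [] [] []; rewrite /= ?addr0 ?add0r ?ler1n.
Qed.

Lemma fiber_token0 h : fiber h h.1 = max_fiber h.
Proof.
rewrite fiberE; apply: eq_bigr => i _.
by case: (h.1 i) (h.2 i) => [] []; rewrite /= ?addr0 ?add0r.
Qed.

Lemma guess_valueE h p : guess_value h p = 2%:R ^- l * \sum_y fiber h y * p y.
Proof.
rewrite /guess_value -big_distrr /=; congr (_ * _).
under [RHS]eq_bigr do rewrite /fiber mulr_suml.
rewrite exchange_big /=; apply: eq_bigr => x _.
rewrite (bigD1 (boxplus x h)) //= eqxx mul1r big1 ?addr0 // => y.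
by rewrite eq_sym => /negbTE ->; rewrite mul0r.
Qed.

Lemma guess_value_le h p : is_distr p -> guess_value h p <= 2%:R ^- l * max_fiber h.
Proof.
move=> [p_ge0 p_sum1]; rewrite guess_valueE ler_wpM2l ?invr_ge0 ?exprn_ge0 //.
apply: (@le_trans _ _ (\sum_y max_fiber h * p y)).
  by apply: ler_sum => y _; rewrite ler_wpM2r ?fiber_le_max.
by rewrite -big_distrr /= p_sum1 mulr1.
Qed.

Lemma point_mass_distr y : is_distr (point_mass y).
Proof.
split=> [z|]; first by rewrite ffunE ler0n.
rewrite (bigD1 y) //= ffunE eqxx big1 ?addr0 // => z /negbTE.
by rewrite ffunE => ->.
Qed.

Lemma guess_value_token0 h : guess_value h (point_mass h.1) = 2%:R ^- l * max_fiber h.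
Proof.
rewrite guess_valueE (bigD1 h.1) //= ffunE eqxx mulr1 fiber_token0.
by rewrite big1 ?addr0 // => y /negbTE; rewrite ffunE => ->; rewrite mulr0.
Qed.

Lemma Gtok_max_fiber h : Gtok R h = 2%:R ^- l * max_fiber h.
Proof.
apply: sup_eq_max; first by exists (point_mass h.1); [apply: point_mass_distr |
                                                 apply: guess_value_token0].
by move=> _ [p /(guess_value_le h) p_le <-].
Qed.

Lemma successE (g : guess_proc R l) :
  success g = \sum_h 2%:R ^- (2 * l) * guess_value h (g h).
Proof.
apply: eq_bigr => h _; rewrite /guess_value big_distrr /=.
by apply: eq_bigr => x _; rewrite mulrA.
Qed.

Lemma ProbVE_q_seq : ProbVE R l = q_seq R l.
Proof.
apply: sup_eq_max.
  exists (fun h => point_mass h.1); first by move=> h; apply: point_mass_distr.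
  by rewrite successE; apply: eq_bigr => h _; rewrite guess_value_token0 Gtok_max_fiber.
move=> _ [g g_distr <-]; rewrite successE; apply: ler_sum => h _.
by rewrite Gtok_max_fiber ler_wpM2l ?invr_ge0 ?exprn_ge0 ?guess_value_le.
Qed.

Lemma sum_max_fiber : \sum_h max_fiber h = 6%:R ^+ l.
Proof.
rewrite -(pair_bigA _ (fun h0 h1 : bits l => max_fiber (h0, h1))) /=.
have sum_token1 (h0 : bits l) : \sum_(h1 : bits l) max_fiber (h0, h1) = 3%:R ^+ l.
  rewrite -(bigA_distr_bigA (fun i b => if h0 i == b then 2%:R else 1 : R)).
  rewrite -[l in _ ^+ l]card_ord -prodr_const; apply: eq_bigr => i _.
  by rewrite big_bool; case: (h0 i); rewrite /= ?natr1 ?nat1r.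
under eq_bigr do rewrite sum_token1.
rewrite sumr_const card_ffun card_bool card_ord.
by rewrite -[LHS]mulr_natr natrX -exprMn -natrM.
Qed.

Lemma q_seq_geometric : q_seq R l = (3%:R / 4%:R) ^+ l.
Proof.
rewrite /q_seq; under eq_bigr do rewrite Gtok_max_fiber mulrA.
rewrite -big_distrr /= sum_max_fiber exprM -!exprVn -!exprMn.
by congr (_ ^+ _); field.
Qed.

End Guessing.

Theorem proposition6p7 (R : realType) :
  indistinguishable (ProbVE R) (q_seq R) /\
  (forall l : nat, q_seq R l = (3%:R / 4%:R) ^+ l) /\
  negligible (ProbVE R).
Proof.
have ProbVE_geometric : ProbVE R = fun l => (3%:R / 4%:R) ^+ l.
  by apply: funext => l; rewrite ProbVE_q_seq q_seq_geometric.
split; first by rewrite (funext (@ProbVE_q_seq R)); apply: indistinguishable_refl.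
split; first exact: q_seq_geometric.
by rewrite ProbVE_geometric; apply: negligible_geometric.
Qed.
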